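(* Let $G$ be a graph, $f,p\ge 1$ integers, $\beta\ge0$. The graph $H$ returned by Algorithm 1 (described in the context), when $A_S$ is a $\beta$-additive $f$-EFT (resp. $f$-VFT) sourcewise spanner with respect to the computed source set $S$, is a $(\beta+2)$-additive $f$-EFT (resp. $f$-VFT) spanner of $G$: for every set $F$ of at most $f$ edges (resp. vertices) and all $s,t\in V(G)$ (not in $F$ in the vertex case) connected in $G-F$, $d_{H-F}(s,t)\le d_{G-F}(s,t)+\beta+2$.
   Context: $d_X(u,v)$ is the shortest-path distance in $X$; $X-F$ removes the edges (resp. the vertices and their incident edges) in $F$. Algorithm 1 (input: graph $G$, integers $f,p\ge1$, and a value $\beta$). Initially every vertex is colored white and has $\mathrm{counter}(v)=f+1$; $S=\emptyset$, $E'=\emptyset$. For a vertex $u$, let $N_w(u)$ be the set of currently white neighbors of $u$ and $\delta_w(u)=|N_w(u)|$. While there exists $s\in V\setminus S$ with $\delta_w(s)\ge p$: add $s$ to $S$, color $s$ red, and for each $u\in N_w(s)$ decrement $\mathrm{counter}(u)$, add edge $(s,u)$ to $E'$, and if $\mathrm{counter}(u)=0$ color $u$ black. After the loop, add to $E'$ every edge $(u,v)\in E(G)$ such that $u$ is white. Let $A_S$ be a $\beta$-additive $f$-EFT (resp. $f$-VFT) sourcewise spanner of $G$ with respect to $S$, i.e. a subgraph such that for every set $F$ of at most $f$ edges (resp. vertices) and every $s\in S$, $v\in V(G)$, $d_{A_S-F}(s,v)\le d_{G-F}(s,v)+\beta$. Return $H=(V(G),E'\cup E(A_S))$. *)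

(* Simple graph on a finite vertex type T, given by a
   symmetric irreflexive relation e. *)
From mathcomp Require Import all_boot.
Set Implicit Arguments. Unset Strict Implicit. Unset Printing Implicit Defensive.

Section Alg.
Variable T : finType.

Definition dist_le (g : rel T) (u v : T) (k : nat) : Prop :=
  exists q : seq T, [/\ path g u q, last u q = v & size q <= k].

(* g - F for a set F of edges (unordered pairs, given as a list of pairs). *)
Definition rmE (F : seq (T * T)) (g : rel T) : rel T :=
  fun x y => [&& g x y, (x, y) \notin F & (y, x) \notin F].

Definition rmV (F : seq T) (g : rel T) : rel T :=
  fun x y => [&& g x y, x \notin F & y \notin F].

Definition EFT_sourcewise (g A : rel T) (S : seq T) (f beta : nat) : Prop :=
  forall F : seq (T * T), size F <= f ->
  forall s v k, s \in S -> dist_le (rmE F g) s v k -> dist_le (rmE F A) s v (k + beta).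

Definition VFT_sourcewise (g A : rel T) (S : seq T) (f beta : nat) : Prop :=
  forall F : seq T, size F <= f ->
  forall s v k, s \in S -> s \notin F -> v \notin F ->
  dist_le (rmV F g) s v k -> dist_le (rmV F A) s v (k + beta).

Definition EFT_spanner (g H : rel T) (f beta : nat) : Prop :=
  forall F : seq (T * T), size F <= f ->
  forall s t k, dist_le (rmE F g) s t k -> dist_le (rmE F H) s t (k + beta).

Definition VFT_spanner (g H : rel T) (f beta : nat) : Prop :=
  forall F : seq T, size F <= f ->
  forall s t k, s \notin F -> t \notin F ->
  dist_le (rmV F g) s t k -> dist_le (rmV F H) s t (k + beta).

(* State of Algorithm 1: source list S (= red vertices), counters, E'. *)
Record state := State { sS : seq T; cnt : T -> nat; ed : rel T }.

Definition init_state (f : nat) : state :=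
  State [::] (fun _ => f.+1) (fun _ _ => false).

(* white = neither red (in S) nor black (counter 0) *)
Definition white (st : state) (u : T) : bool := (u \notin sS st) && (0 < cnt st u).

Definition Nw (e : rel T) (st : state) (s u : T) : bool := e s u && white st u.

Definition deg_w (e : rel T) (st : state) (s : T) : nat := #|[pred u | Nw e st s u]|.

Definition step (e : rel T) (st : state) (s : T) : state :=
  State (s :: sS st)
        (fun u => if Nw e st s u then (cnt st u).-1 else cnt st u)
        (fun x y => [|| ed st x y, (x == s) && Nw e st s y | (y == s) && Nw e st s x]).

(* ss is a legal sequence of choices of the while loop from st, and the
   loop condition fails after the last one. *)
Fixpoint valid_run (e : rel T) (p : nat) (st : state) (ss : seq T) : Prop :=
  match ss with
  | [::] => forall s, s \notin sS st -> deg_w e st s < p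
  | s :: ss' => [/\ s \notin sS st, p <= deg_w e st s & valid_run e p (step e st s) ss']
  end.

Definition final_state (e : rel T) (f : nat) (ss : seq T) : state :=
  foldl (step e) (init_state f) ss.

Definition Eprime (e : rel T) (st : state) : rel T :=
  fun x y => ed st x y || (e x y && (white st x || white st y)).

Definition output (e : rel T) (st : state) (A : rel T) : rel T :=
  fun x y => Eprime e st x y || A x y.

End Alg.

(* Every vertex x left non-white by the loop is either a source, or has lost
   its whole counter, i.e. it is joined in E' to f+1 sources.  Follow a walk
   of length k in G - F as long as its edges survive in H - F.  At the first
   missing edge (x, y) the vertex x is not white, so either x is a source, or
   at most f of its f+1 source neighbours are cut off by F and one of them,
   s', is still adjacent to x in H - F.  From that source the sourcewise
   spanner reaches the target with additive error beta; the detour through s'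
   costs at most 2 extra edges. *)
From mathcomp Require Import all_boot.
From mathcomp Require Import zify.
Set Implicit Arguments. Unset Strict Implicit. Unset Printing Implicit Defensive.

Section LoopInvariant.
Variables (T : finType) (e : rel T) (f : nat).
Hypothesis esym : symmetric e.

Definition red_nbrs (st : state T) (u : T) : pred T :=
  [pred x | (x \in sS st) && ed st x u].

(* A non-red vertex has lost one unit of its counter for each red E'-neighbour. *)
Definition loop_inv (st : state T) : Prop :=
  [/\ symmetric (ed st), subrel (ed st) e &
      forall u, u \notin sS st -> f < #|red_nbrs st u| + cnt st u].

Lemma loop_inv_init : loop_inv (init_state T f).
Proof. by split=> // u _; rewrite /= addnC ltnS leq_addr. Qed.

Lemma loop_inv_step st s :
  loop_inv st -> s \notin sS st -> loop_inv (step e st s).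
Proof.
case=> edsym ed_e cnt_ok s_new; split.
- by move=> x y /=; rewrite edsym; congr (_ || _); apply: orbC.
- move=> x y /= /or3P[/ed_e // | /andP[/eqP -> /andP[]] // | /andP[/eqP -> /andP[]]].
  by rewrite esym.
- move=> u /=; rewrite in_cons negb_or => /andP[_ u_old].
  have more_red : Nw e st s u + #|red_nbrs st u| <= #|red_nbrs (step e st s) u|.
    rewrite [leqRHS](cardD1 s); apply: leq_add.
      by rewrite !inE /= eqxx /=; case: (Nw e st s u); rewrite ?orbT.
    apply/subset_leq_card/subsetP => x /andP[x_old ed_xu].
    rewrite !inE /= x_old ed_xu orbT /= andbT.
    by apply: contraNneq s_new => <-.
  have := cnt_ok u u_old.
  case Nw_su: (Nw e st s u) more_red => /= more_red; last by lia.
  move: Nw_su => /and3P[_ _ cnt_pos]; lia.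
Qed.

Lemma loop_inv_run p st ss :
  loop_inv st -> valid_run e p st ss -> loop_inv (foldl (step e) st ss).
Proof.
elim: ss st => [|s ss IH] st //= inv_st [s_new _ run].
exact: IH (loop_inv_step inv_st s_new) run.
Qed.

Lemma nonwhite_red_nbrs st u :
  loop_inv st -> u \notin sS st -> ~~ white st u -> f < #|red_nbrs st u|.
Proof.
case=> _ _ cnt_ok u_nred; rewrite /white u_nred /= -leqNgt leqn0 => /eqP cnt0.
by have := cnt_ok u u_nred; rewrite cnt0 addn0.
Qed.

End LoopInvariant.

Section Walks.
Variable T : finType.
Implicit Types (g h : rel T) (u v : T).

Lemma dist_le_sub g h u v k : subrel g h -> dist_le g u v k -> dist_le h u v k.
Proof. by move=> gh [q [pq lq sq]]; exists q; split=> //; apply: sub_path pq. Qed.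

Lemma dist_le_leq g u v k k' : k <= k' -> dist_le g u v k -> dist_le g u v k'.
Proof. by move=> kk' [q [pq lq sq]]; exists q; split=> //; apply: leq_trans kk'. Qed.

Definition stretch_from g h (ok : pred T) (b : nat) (s : T) : Prop :=
  forall v k, ok v -> dist_le g s v k -> dist_le h s v (k + b).

Lemma dist_le_via_hubs g h (ok : pred T) b :
  (forall x y, g x y -> ~~ h x y -> exists2 s,
     stretch_from g h ok b s & s = x \/ h x s /\ g s x) ->
  forall u v k, ok v -> dist_le g u v k -> dist_le h u v (k + (b + 2)).
Proof.
move=> hubs u v k ok_v [q [pq lq sq]]; subst v.
apply: (@dist_le_leq _ _ _ (size q + (b + 2))); first by rewrite leq_add2r.
elim: q u pq {sq} ok_v => [|y q IH] u /=; first by exists [::].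
case/andP=> g_uy pq ok_v.
have walk_u : dist_le g u (last y q) (size q).+1 by exists (y :: q); rewrite /= g_uy.
case h_uy: (h u y).
  have [q' [pq' lq' sq']] := IH y pq ok_v.
  by exists (y :: q'); rewrite /= h_uy pq' lq'; split=> //; lia.
have [s stretch_s [Esu | [h_us g_su]]] := hubs u y g_uy (negbT h_uy).
  by subst s; apply: dist_le_leq _ (stretch_s _ _ ok_v walk_u); lia.
have [|q' [pq' lq' sq']] := stretch_s (last y q) (size q).+2 ok_v.
  by case: walk_u => q' [pq' lq' sq']; exists (u :: q'); rewrite /= g_su pq'.
by exists (s :: q'); rewrite /= h_us pq' lq'; split=> //; lia.
Qed.

Lemma exists_notin_of_card_gt (P : pred T) (s : seq T) :
  size s < #|P| -> exists2 x, P x & x \notin s.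
Proof.
move=> small; apply/exists_inP; apply: contraTT small => /exists_inPn s_all.
rewrite -leqNgt; apply: leq_trans (card_size s).
by apply/subset_leq_card/subsetP => x /s_all /negPn.
Qed.

End Walks.

Section OutputSpanner.
Variables (T : finType) (e : rel T) (f beta : nat) (st : state T) (A : rel T).
Hypotheses (eirr : irreflexive e) (inv : loop_inv e f st).

Let H := output e st A.

Lemma output_red_nbr x z : z \in red_nbrs st x -> H x z && e z x.
Proof.
case: inv => edsym ed_e _ /andP[_ ed_zx].
by rewrite /H /output /Eprime edsym ed_zx (ed_e _ _ ed_zx).
Qed.

Lemma missing_output_edge x y :
  e x y -> ~~ H x y -> x \notin sS st -> f < #|red_nbrs st x|.
Proof.
move=> exy nH x_nred; apply: nonwhite_red_nbrs inv x_nred _.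
by apply: contraNN nH => wx; rewrite /H /output /Eprime exy wx !orbT.
Qed.

Lemma red_nbr_avoiding x y (F : seq T) :
  e x y -> ~~ H x y -> x \notin sS st -> size F <= f ->
  exists2 z, z \in red_nbrs st x & z \notin F.
Proof.
move=> exy nH x_nred sF; apply: exists_notin_of_card_gt.
exact: leq_ltn_trans sF (missing_output_edge exy nH x_nred).
Qed.

Lemma output_EFT_spanner :
  EFT_sourcewise e A (sS st) f beta -> EFT_spanner e H f (beta + 2).
Proof.
move=> spA F sF u v k; apply: (dist_le_via_hubs (ok := predT)) => // x y.
have stretch_red s : s \in sS st -> stretch_from (rmE F e) (rmE F H) predT beta s.
  move=> s_red w k' _ /(spA F sF _ _ _ s_red); apply: dist_le_sub.
  by move=> a b /and3P[Aab ab ba]; rewrite /rmE /H /output Aab orbT ab ba.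
case/and3P=> exy xyF yxF nH; case: (boolP (x \in sS st)) => x_red.
  by exists x; [apply: stretch_red | left].
have nHxy : ~~ H x y by apply: contraNN nH => Hxy; rewrite /rmE Hxy xyF yxF.
pose other (ab : T * T) := if ab.1 == x then ab.2 else ab.1.
have [|z z_nbr zF] := red_nbr_avoiding (F := map other F) exy nHxy x_red _.
  by rewrite size_map.
have /andP[z_red _] := z_nbr; have /andP[Hxz ezx] := output_red_nbr z_nbr.
have zx : z != x by apply: contraTneq ezx => ->; rewrite eirr.
have zxF : (z, x) \notin F.
  by apply: contra zF => inF; apply/mapP; exists (z, x); rewrite // /other /= (negbTE zx).
have xzF : (x, z) \notin F.
  by apply: contra zF => inF; apply/mapP; exists (x, z); rewrite // /other /= eqxx.
exists z; first exact: stretch_red.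
by right; rewrite /rmE Hxz ezx zxF xzF.
Qed.

Lemma output_VFT_spanner :
  VFT_sourcewise e A (sS st) f beta -> VFT_spanner e H f (beta + 2).
Proof.
move=> spA F sF u v k u_ok v_ok.
apply: (dist_le_via_hubs (ok := [pred w | w \notin F])) => // x y.
have stretch_red s : s \in sS st -> s \notin F ->
    stretch_from (rmV F e) (rmV F H) [pred w | w \notin F] beta s.
  move=> s_red sF' w k' w_ok /(spA F sF _ _ _ s_red sF' w_ok); apply: dist_le_sub.
  by move=> a b /and3P[Aab aF bF]; rewrite /rmV /H /output Aab orbT aF bF.
case/and3P=> exy xF yF nH; case: (boolP (x \in sS st)) => x_red.
  by exists x; [apply: stretch_red | left].
have nHxy : ~~ H x y by apply: contraNN nH => Hxy; rewrite /rmV Hxy xF yF.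
have [z z_nbr zF] := red_nbr_avoiding exy nHxy x_red sF.
have /andP[z_red _] := z_nbr; have /andP[Hxz ezx] := output_red_nbr z_nbr.
exists z; first exact: stretch_red.
by right; rewrite /rmV Hxz ezx xF zF.
Qed.

End OutputSpanner.

Theorem theorem2 (T : finType) (e : rel T) (f p beta : nat) (ss : seq T) :
  symmetric e -> irreflexive e -> 1 <= f -> 1 <= p ->
  valid_run e p (init_state T f) ss ->
  let st := final_state e f ss in
  (forall A : rel T, symmetric A -> subrel A e ->
     EFT_sourcewise e A (sS st) f beta ->
     EFT_spanner e (output e st A) f (beta + 2)) /\
  (forall A : rel T, symmetric A -> subrel A e ->
     VFT_sourcewise e A (sS st) f beta ->
     VFT_spanner e (output e st A) f (beta + 2)).
Proof.
move=> esym eirr _ _ run st.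
have inv : loop_inv e f st := loop_inv_run esym (loop_inv_init e f) run.
by split=> A _ _; [apply: output_EFT_spanner | apply: output_VFT_spanner].
Qed.
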